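(* In the two-project discovery model described in the context, suppose the principal's payoff is $1$ if at least one project is approved (i.e., she proposes a nonempty set $S$ and it is approved) and $0$ otherwise, and suppose $\mu_1<\mu_2<0$. Then discovering the project $i$ satisfying $\sigma_i/\mu_i<\sigma_j/\mu_j$ (where $\{i,j\}=\{1,2\}$) is better than discovering project $j$, and discovering both project values is strictly better than discovering either project value individually.
   Context: Model. There are two projects $i\in\{1,2\}$. The agent's values $v=(v_1,v_2)\in\mathbb{R}^2$ are drawn from a common prior that is bivariate normal with means $\mu_1,\mu_2$, standard deviations $\sigma_1,\sigma_2>0$ and correlation $\rho\in(0,1)$. Timing: (1) the principal chooses which project values to publicly discover (project 1's value, project 2's value, or both); (2) the chosen values are publicly revealed and the agent forms a posterior by Bayes' rule; (3) knowing the revealed values, the principal proposes a subset $S\subseteq\{1,2\}$; (4) the agent approves iff $\sum_{i\in S}\mathbb{E}[v_i\mid\text{revealed information}]\ge 0$. The principal chooses the proposal to maximize her payoff given the revealed information, and one discovery rule is better than another if its ex-ante expected payoff is strictly higher. *)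

From HB Require Import structures.
From mathcomp Require Import all_boot all_order all_algebra.
From mathcomp Require Import all_classical all_reals all_analysis.
Set Implicit Arguments. Unset Strict Implicit. Unset Printing Implicit Defensive.
Import Order.TTheory GRing.Theory Num.Theory.
Local Open Scope ring_scope.

Definition bvn_pdf {R : realType} (mu1 mu2 s1 s2 rho : R) (v : R * R) : R :=
  let z1 := (v.1 - mu1) / s1 in
  let z2 := (v.2 - mu2) / s2 in
  (2 * pi * s1 * s2 * Num.sqrt (1 - rho ^+ 2))^-1 *
  expR (- (z1 ^+ 2 - 2 * rho * z1 * z2 + z2 ^+ 2) / (2 * (1 - rho ^+ 2))).

Inductive discovery := Disc1 | Disc2 | DiscBoth.

(* Posterior means (E[v_1 | info], E[v_2 | info]) of the agent after the
   revealed values, computed by Bayes' rule for the bivariate normal prior. *)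
Definition posterior_mean {R : realType} (mu1 mu2 s1 s2 rho : R)
    (D : discovery) (v : R * R) : 'I_2 -> R :=
  fun k =>
  match D with
  | DiscBoth => if k == ord0 then v.1 else v.2
  | Disc1 => if k == ord0 then v.1 else mu2 + rho * s2 / s1 * (v.1 - mu1)
  | Disc2 => if k == ord0 then mu1 + rho * s1 / s2 * (v.2 - mu2) else v.2
  end.

Definition approves {R : realType} (m : 'I_2 -> R) (S : {set 'I_2}) : bool :=
  0 <= \sum_(i in S) m i.

Definition principal_utility {R : realType} (S : {set 'I_2}) (approved : bool) : R :=
  if (S != finset.set0) && approved then 1 else 0.

Definition optimal_payoff {R : realType} (m : 'I_2 -> R) : R :=
  \big[Num.max/0]_(S : {set 'I_2}) principal_utility S (approves m S).

Definition expected_payoff {R : realType} (mu1 mu2 s1 s2 rho : R) (D : discovery)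
    : \bar R :=
  (\int[(@lebesgue_measure R) \x (@lebesgue_measure R)]_(v in [set: R * R])
     (optimal_payoff (posterior_mean mu1 mu2 s1 s2 rho D v)
        * bvn_pdf mu1 mu2 s1 s2 rho v)%:E)%E.

(* Put a := -mu1/s1 > 0 and b := -mu2/s2 > 0. The principal earns 1 exactly
   when some posterior mean is nonnegative: she then proposes that project
   alone, and any nonempty proposal of negative means is rejected. After v1 is
   revealed the posterior means are mu1 + s1 z and mu2 + rho s2 z with
   z = (v1 - mu1)/s1 standard normal, so the payoff is the standard normal tail
   at min(a, b/rho); exchanging the two coordinates, revealing v2 gives the tail
   at min(b, a/rho). Revealing both gives P(v1 >= 0 or v2 >= 0), which strictly
   exceeds P(v1 >= 0) and P(v2 >= 0), the tails at a and at b. Since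
   0 < rho < 1 and the tail is strictly decreasing, comparing thresholds yields
   all four claims; s1/mu1 < s2/mu2 is equivalent to a < b. *)

From HB Require Import structures.
From mathcomp Require Import all_boot all_order all_algebra.
From mathcomp Require Import all_classical all_reals all_analysis.
From mathcomp Require Import unstable measurable_realfun ring lra.
Import Order.TTheory GRing.Theory Num.Theory numFieldNormedType.Exports.
Set Implicit Arguments. Unset Strict Implicit. Unset Printing Implicit Defensive.
Local Open Scope ring_scope.

Section optimal_payoff.
Variable R : realType.
Implicit Type m : 'I_2 -> R.

Lemma optimal_payoffE m :
  optimal_payoff m = if (0 <= m ord0) || (0 <= m ord_max) then 1 else 0.
Proof.
have [some_ge0 | all_lt0] := boolP (_ || _).
- have [i mi_ge0] : exists i, 0 <= m i.
    by case/orP: some_ge0; [exists ord0 | exists ord_max].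
  apply/le_anti/andP; split.
    by apply: bigmax_le => // S _; rewrite /principal_utility; case: ifP.
  rewrite /optimal_payoff (bigmaxD1 [set i]%SET) // le_max.
  by rewrite /principal_utility /approves big_set1 mi_ge0 -card_gt0 cards1 /= lexx.
- have m_lt0 j : m j < 0.
    have [->|->] : j = ord0 \/ j = ord_max.
      by case: j => -[|[|//]] ?; [left | right]; apply: val_inj.
      by rewrite ltNge; apply: contra all_lt0 => ->.
    by rewrite ltNge; apply: contra all_lt0 => ->; rewrite orbT.
  rewrite /optimal_payoff; apply: (big_ind (fun x : R => x = 0)) => [//|x y -> ->|S _].
    exact: maxxx.
  rewrite /principal_utility /approves.
  have [->|[i iS]] := set_0Vmem S; first by rewrite eqxx.
  have sum_lt0 : \sum_(j in S) m j < 0 + 0.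
    rewrite (bigD1 i) //=; apply: ltr_leD => //.
    by apply: sumr_le0 => j _; exact: ltW.
  by rewrite addr0 ltNge in sum_lt0; rewrite (negbTE sum_lt0) andbF.
Qed.

Lemma optimal_payoff_ge0 m : 0 <= optimal_payoff m.
Proof. by rewrite optimal_payoffE; case: ifP. Qed.

Lemma measurable_optimal_payoff d (T : measurableType d) (f : T -> 'I_2 -> R) :
  (forall i, measurable_fun setT (f ^~ i)) ->
  measurable_fun setT (fun x => optimal_payoff (f x)).
Proof.
move=> mf; under eq_fun do rewrite optimal_payoffE.
by apply: measurable_fun_ifT => //; apply: measurable_or; exact: measurable_fun_ler.
Qed.

End optimal_payoff.

Section integral_gt0.
Context d (T : measurableType d) (R : realType) (mu : {measure set T -> \bar R}).

Lemma integral_gt0 (A : set T) (f : T -> R) :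
  measurable A -> measurable_fun A f -> (forall x, A x -> 0 < f x) ->
  (0 < mu A)%E -> (0 < \int[mu]_(x in A) (f x)%:E)%E.
Proof.
move=> mA mf f_gt0 muA_gt0.
have f_ge0 x : A x -> (0 <= (f x)%:E)%E by move=> /f_gt0/ltW; rewrite lee_fin.
rewrite lt_neqAle integral_ge0 // andbT; apply/eqP => int_eq0.
have [N [mN muN0 notN]] : ae_eq mu A (EFin \o f) (cst 0%E).
  apply/ae_eq_integral_abs => //; first exact/measurable_EFinP.
  by rewrite int_eq0; apply: eq_integral => x /set_mem Ax; rewrite gee0_abs ?f_ge0.
have : (mu A <= mu N)%E.
  apply: le_measure; rewrite ?inE // => x Ax; apply: notN => /(_ Ax) [].
  by apply/eqP; rewrite gt_eqF // f_gt0.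
by rewrite muN0 leNgt muA_gt0.
Qed.

End integral_gt0.

Section normal_tail.
Variable R : realType.
Local Open Scope classical_set_scope.

Lemma normal_pdf_gt0 (m s x : R) : s != 0 -> 0 < normal_pdf m s x.
Proof. by move=> s0; rewrite normal_pdfE // mulr_gt0 ?normal_peak_gt0 ?expR_gt0. Qed.

Lemma normal_peakE (s : R) : 0 < s -> normal_peak s = (s * Num.sqrt (pi *+ 2))^-1.
Proof.
by move=> s_gt0; rewrite /normal_peak -mulrnAr sqrtrM ?sqr_ge0 // sqrtr_sqr gtr0_norm.
Qed.

Lemma normal_pdf_affine (m s x : R) : 0 < s ->
  normal_pdf m s (m + s * x) * s = normal_pdf 0 1 x.
Proof.
move=> s_gt0; rewrite !normal_pdfE ?oner_eq0 ?gt_eqF // !normal_peakE ?ltr01 //.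
have -> : normal_fun m s (m + s * x) = normal_fun 0 1 x.
  by rewrite /normal_fun; congr expR; field; rewrite gt_eqF.
have q_neq0 : Num.sqrt (pi *+ 2) != 0 :> R.
  by rewrite gt_eqF // sqrtr_gt0 mulrn_wgt0 // pi_gt0.
by field; rewrite q_neq0 gt_eqF.
Qed.

Definition normal_tail (t : R) : \bar R :=
  (\int[lebesgue_measure]_(x in `[t, +oo[) (normal_pdf 0 1 x)%:E)%E.

Lemma integral_normal_pdf_tail (m s t : R) : 0 < s ->
  (\int[lebesgue_measure]_(x in `[(m + s * t)%R, +oo[) (normal_pdf m s x)%:E)%E =
  normal_tail t.
Proof.
move=> s_gt0; pose F (x : R) := m + s * x.
have F'E : F^`()%classic = cst s.
  apply/funext => x; rewrite derive1E deriveD // derive_cst deriveM // derive_id.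
  by rewrite derive_cst scaler0 add0r addr0 /cst; exact: mulr1.
rewrite -/(F t) increasing_ge0_integration_by_substitutiony.
- by apply: eq_integral => x _; rewrite F'E; congr EFin; exact: normal_pdf_affine.
- by move=> x y _ _ xy; rewrite /F ltrD2l ltr_pM2l.
- by rewrite F'E => x _; exact: cvg_cst.
- by rewrite F'E; exact: is_cvg_cst.
- by rewrite F'E; exact: is_cvg_cst.
- split; first by move=> x _; apply: derivableD => //; apply: derivableM => //.
  apply: cvg_at_right_filter; apply: cvgD; first exact: cvg_cst.
  by apply: cvgM; [exact: cvg_cst | exact: cvg_id].
- exact: (cvg_comp _ _ (gt0_cvgMry s_gt0 cvg_id) (cvg_addrl m)).
- by apply: continuous_subspaceT; apply: continuous_normal_pdf; rewrite gt_eqF.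
- by move=> x _; exact: normal_pdf_ge0.
Qed.

Lemma normal_tail_fin_num t : normal_tail t \is a fin_num.
Proof.
rewrite ge0_fin_numE; last by apply: integral_ge0 => x _; rewrite lee_fin normal_pdf_ge0.
apply: (@le_lt_trans _ _ 1%E); last exact: ltry.
rewrite -(integral_normal_pdf 0 1); apply: ge0_subset_integral => //.
- by apply/measurable_EFinP; exact: measurable_normal_pdf.
- by move=> x _; rewrite lee_fin normal_pdf_ge0.
Qed.

Lemma normal_tail_lt t t' : t < t' -> (normal_tail t' < normal_tail t)%E.
Proof.
move=> tt'; rewrite {2}/normal_tail.
rewrite (@itv_bndbnd_setU _ _ (BLeft t) (BLeft t') (BInfty _ false)) ?bnd_simp ?ltW //.
rewrite ge0_integral_setU //.
- rewrite lteDr ?normal_tail_fin_num //; apply: integral_gt0 => //.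
  + by apply: measurable_funTS; exact: measurable_normal_pdf.
  + by move=> x _; rewrite normal_pdf_gt0 ?oner_eq0.
  + have itv_gt0 : (0 < lebesgue_measure (`[t, t'[ : set R))%E.
      by rewrite lebesgue_measure_itv /= lte_fin tt' -EFinB lte_fin subr_gt0.
    exact: itv_gt0.
- by apply/measurable_EFinP; apply: measurable_funTS; exact: measurable_normal_pdf.
- by move=> x _; rewrite lee_fin normal_pdf_ge0.
- rewrite disj_set2E; apply/eqP/seteqP; split => // x [] /=.
  by rewrite !in_itv /= andbT => /andP[_ xt'] /(lt_le_trans xt'); rewrite ltxx.
Qed.

Lemma normal_tail_le t t' : t <= t' -> (normal_tail t' <= normal_tail t)%E.
Proof. by rewrite le_eqVlt => /predU1P[-> // | /normal_tail_lt/ltW]. Qed.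

End normal_tail.

Section ge0_integral_prod_swap.
Context d1 d2 (T1 : measurableType d1) (T2 : measurableType d2) (R : realType).
Variables (m1 : {sigma_finite_measure set T1 -> \bar R})
  (m2 : {sigma_finite_measure set T2 -> \bar R}).
Local Open Scope ereal_scope.

Lemma ge0_integral_prod_swap (f : T2 * T1 -> \bar R) :
  measurable_fun setT f -> (forall z, 0 <= f z) ->
  \int[m2 \x m1]_z f z = \int[m1 \x m2]_z f (swap z).
Proof.
move=> mf f_ge0; rewrite fubini_tonelli2 // fubini_tonelli1 //.
exact: (measurableT_comp mf (@measurable_swap _ _ T1 T2)).
Qed.

End ge0_integral_prod_swap.

Lemma indic_setX (T1 T2 : Type) (R : pzRingType) (A : set T1) (B : set T2) z :
  \1_(A `*` B) z = \1_A z.1 * \1_B z.2 :> R.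
Proof. by rewrite !indicE in_setX -natrM mulnb. Qed.

Section bivariate_normal.
Variable R : realType.
Local Open Scope classical_set_scope.
Local Notation lebesgue2 := ((@lebesgue_measure R) \x (@lebesgue_measure R))%E.

Lemma bvn_pdfE (mu1 mu2 s1 s2 rho x y : R) :
  0 < s1 -> 0 < s2 -> 0 < rho -> rho < 1 ->
  bvn_pdf mu1 mu2 s1 s2 rho (x, y) =
  normal_pdf mu1 s1 x *
  normal_pdf (mu2 + rho * s2 / s1 * (x - mu1)) (s2 * Num.sqrt (1 - rho ^+ 2)) y.
Proof.
move=> s1_gt0 s2_gt0 rho_gt0 rho_lt1.
have rho2_gt0 : 0 < 1 - rho ^+ 2 by rewrite subr_gt0 expr_lt1 // ltW.
have pi2_gt0 : 0 < pi *+ 2 :> R by rewrite mulrn_wgt0 // pi_gt0.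
have w_gt0 : 0 < Num.sqrt (1 - rho ^+ 2) by rewrite sqrtr_gt0.
rewrite !normal_pdfE ?gt_eqF ?mulr_gt0 // !normal_peakE ?mulr_gt0 //.
rewrite /bvn_pdf /normal_fun /= [RHS]mulrACA -expRD -invfM.
have : Num.sqrt (1 - rho ^+ 2) ^+ 2 = 1 - rho ^+ 2 by rewrite sqr_sqrtr // ltW.
have : Num.sqrt (pi *+ 2) ^+ 2 = pi *+ 2 :> R by rewrite sqr_sqrtr // ltW.
move: (Num.sqrt (1 - rho ^+ 2)) (Num.sqrt (pi *+ 2)) w_gt0 => w q w_gt0 q2 w2.
congr (_^-1 * expR _).
  by apply: (@eq_trans _ _ (s1 * s2 * w * q ^+ 2)); [rewrite q2 | ]; ring.
by rewrite [(s2 * w) ^+ 2]exprMn w2; field; rewrite !gt_eqF.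
Qed.

Lemma bvn_pdf_gt0 (mu1 mu2 s1 s2 rho : R) v :
  0 < s1 -> 0 < s2 -> 0 < rho -> rho < 1 -> 0 < bvn_pdf mu1 mu2 s1 s2 rho v.
Proof.
move=> s1_gt0 s2_gt0 rho_gt0 rho_lt1; case: v => x y; rewrite bvn_pdfE //.
have rho2_lt1 : 0 < 1 - rho ^+ 2 by rewrite subr_gt0 expr_lt1 // ltW.
by rewrite mulr_gt0 // normal_pdf_gt0 // gt_eqF // mulr_gt0 // sqrtr_gt0.
Qed.

Lemma measurable_bvn_pdf (mu1 mu2 s1 s2 rho : R) :
  measurable_fun setT (bvn_pdf mu1 mu2 s1 s2 rho).
Proof.
have mz1 : measurable_fun setT (fun v : R * R => (v.1 - mu1) / s1).
  by apply: measurable_funM => //; apply: measurable_funB => //; exact: measurable_fst.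
have mz2 : measurable_fun setT (fun v : R * R => (v.2 - mu2) / s2).
  by apply: measurable_funM => //; apply: measurable_funB => //; exact: measurable_snd.
apply: measurable_funM => //; apply: measurableT_comp => //.
apply: measurable_funM => //; apply: measurableT_comp => //.
apply: measurable_funD; last exact: measurable_funX.
apply: measurable_funB; first exact: measurable_funX.
by do 2 apply: measurable_funM => //.
Qed.

Lemma measurable_indic_bvn_pdf (mu1 mu2 s1 s2 rho : R) (A : set (R * R)) :
  measurable A ->
  measurable_fun setT (fun v => (\1_A v * bvn_pdf mu1 mu2 s1 s2 rho v)%:E).
Proof.
move=> mA; apply/measurable_EFinP/measurable_funM; last exact: measurable_bvn_pdf.
exact: measurable_indic.
Qed.

Lemma bvn_pdf_swap (mu1 mu2 s1 s2 rho : R) v :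
  bvn_pdf mu2 mu1 s2 s1 rho (swap v) = bvn_pdf mu1 mu2 s1 s2 rho v.
Proof. by rewrite /bvn_pdf /=; congr (_^-1 * expR (- _ / _)); ring. Qed.

Lemma integral_indic_setXT_bvn_pdf (mu1 mu2 s1 s2 rho : R) (A : set R) :
  0 < s1 -> 0 < s2 -> 0 < rho -> rho < 1 -> measurable A ->
  (\int[lebesgue2]_v ((\1_(A `*` setT) v * bvn_pdf mu1 mu2 s1 s2 rho v)%:E) =
   \int[lebesgue_measure]_(x in A) (normal_pdf mu1 s1 x)%:E)%E.
Proof.
move=> s1_gt0 s2_gt0 rho_gt0 rho_lt1 mA.
rewrite fubini_tonelli1; last 2 first.
- by apply: measurable_indic_bvn_pdf; exact: measurableX.
- by move=> v; rewrite lee_fin mulr_ge0 // ltW // bvn_pdf_gt0.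
rewrite [RHS]integral_mkcond; apply: eq_integral => x _; rewrite /fubini_F patchE.
under eq_integral do rewrite indic_setX /= indicT mulr1 bvn_pdfE // mulrA EFinM.
rewrite ge0_integralZl_EFin //; last 3 first.
- by move=> y _; rewrite lee_fin normal_pdf_ge0.
- by apply/measurable_EFinP; exact: measurable_normal_pdf.
- by rewrite mulr_ge0 // normal_pdf_ge0.
rewrite integral_normal_pdf mule1 indicE.
by case: (x \in A); rewrite ?mul1r ?mul0r.
Qed.

Lemma integral_indic_bvn_pdf_gt0 (mu1 mu2 s1 s2 rho : R) (A : set (R * R)) :
  0 < s1 -> 0 < s2 -> 0 < rho -> rho < 1 -> measurable A -> (0 < lebesgue2 A)%E ->
  (0 < \int[lebesgue2]_v ((\1_A v * bvn_pdf mu1 mu2 s1 s2 rho v)%:E))%E.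
Proof.
move=> s1_gt0 s2_gt0 rho_gt0 rho_lt1 mA A_gt0.
have -> : (\int[lebesgue2]_v ((\1_A v * bvn_pdf mu1 mu2 s1 s2 rho v)%:E) =
    \int[lebesgue2]_(v in A) (bvn_pdf mu1 mu2 s1 s2 rho v)%:E)%E.
  by rewrite [RHS]integral_mkcond epatch_indic; apply: eq_integral => v _; rewrite EFinM muleC.
apply: integral_gt0 => //.
- by apply: measurable_funTS; exact: measurable_bvn_pdf.
- by move=> v _; exact: bvn_pdf_gt0.
Qed.

End bivariate_normal.

Section payoff_of_discovery.
Variable R : realType.
Local Open Scope classical_set_scope.

Definition swap_discovery (D : discovery) : discovery :=
  match D with Disc1 => Disc2 | Disc2 => Disc1 | DiscBoth => DiscBoth end.

Lemma measurable_posterior_mean (mu1 mu2 s1 s2 rho : R) D i :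
  measurable_fun setT (fun v => posterior_mean mu1 mu2 s1 s2 rho D v i).
Proof.
have m1 := @measurable_fst _ _ R R; have m2 := @measurable_snd _ _ R R.
rewrite /posterior_mean; case: D; case: (i == ord0) => //.
- by apply: measurable_funD => //; apply: measurable_funM => //; exact: measurable_funB.
- by apply: measurable_funD => //; apply: measurable_funM => //; exact: measurable_funB.
Qed.

Lemma optimal_payoff_swap (mu1 mu2 s1 s2 rho : R) D v :
  optimal_payoff (posterior_mean mu2 mu1 s2 s1 rho (swap_discovery D) (swap v)) =
  optimal_payoff (posterior_mean mu1 mu2 s1 s2 rho D v).
Proof. by rewrite !optimal_payoffE; case: D; rewrite /= orbC. Qed.

Lemma optimal_payoff_Disc1 (mu1 mu2 s1 s2 rho : R) v :
  0 < s1 -> 0 < s2 -> 0 < rho ->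
  optimal_payoff (posterior_mean mu1 mu2 s1 s2 rho Disc1 v) =
  \1_(`[(mu1 + s1 * Num.min (- mu1 / s1) (- mu2 / s2 / rho))%R, +oo[ `*` setT) v.
Proof.
move=> s1_gt0 s2_gt0 rho_gt0; case: v => x y.
rewrite optimal_payoffE indic_setX indicT mulr1 indicE mem_setE in_itv /= andbT.
have -> : x = mu1 + s1 * ((x - mu1) / s1) by rewrite mulrC divfK ?gt_eqF // addrC subrK.
move: ((x - mu1) / s1) => z.
have -> : rho * s2 / s1 * (mu1 + s1 * z - mu1) = rho * s2 * z by field; rewrite gt_eqF.
rewrite lerD2l ler_pM2l // ge_min !ler_pdivrMr ?mulr_gt0 //.
have -> : (0 <= mu1 + s1 * z) = (- mu1 <= z * s1) by apply/idP/idP; lra.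
have -> : (0 <= mu2 + rho * s2 * z) = (- mu2 <= z * rho * s2) by apply/idP/idP; lra.
by case: (_ || _).
Qed.

Lemma optimal_payoff_DiscBoth (mu1 mu2 s1 s2 rho : R) v :
  optimal_payoff (posterior_mean mu1 mu2 s1 s2 rho DiscBoth v) =
  \1_(`[0%R, +oo[ `*` setT) v + \1_(`]-oo, 0%R[ `*` `[0%R, +oo[) v.
Proof.
rewrite optimal_payoffE !indic_setX indicT mulr1 !indicE !mem_setE !in_itv /= !andbT.
by case: (lerP 0 v.1); case: (lerP 0 v.2); rewrite ?mulr0 ?mulr1 ?addr0 ?add0r.
Qed.

End payoff_of_discovery.

Section expected_payoff.
Variable R : realType.
Local Open Scope classical_set_scope.
Local Notation lebesgue2 := ((@lebesgue_measure R) \x (@lebesgue_measure R))%E.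
Variables (mu1 mu2 s1 s2 rho : R).
Hypotheses (s1_gt0 : 0 < s1) (s2_gt0 : 0 < s2) (rho_gt0 : 0 < rho) (rho_lt1 : rho < 1).

Lemma expected_payoff_swap D :
  expected_payoff mu1 mu2 s1 s2 rho D =
  expected_payoff mu2 mu1 s2 s1 rho (swap_discovery D).
Proof.
rewrite /expected_payoff [RHS]ge0_integral_prod_swap.
- by apply: eq_integral => v _; rewrite optimal_payoff_swap bvn_pdf_swap.
- apply/measurable_EFinP/measurable_funM; last exact: measurable_bvn_pdf.
  by apply: measurable_optimal_payoff => i; exact: measurable_posterior_mean.
- by move=> v; rewrite lee_fin mulr_ge0 ?optimal_payoff_ge0 // ltW // bvn_pdf_gt0.
Qed.

Lemma expected_payoff_Disc1 :
  expected_payoff mu1 mu2 s1 s2 rho Disc1 =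
  normal_tail (Num.min (- mu1 / s1) (- mu2 / s2 / rho)).
Proof.
rewrite /expected_payoff; under eq_integral do rewrite optimal_payoff_Disc1 //.
by rewrite integral_indic_setXT_bvn_pdf ?integral_normal_pdf_tail //; exact: measurable_itv.
Qed.

Lemma normal_tail_lt_expected_payoff_DiscBoth :
  (normal_tail (- mu1 / s1) < expected_payoff mu1 mu2 s1 s2 rho DiscBoth)%E.
Proof.
have quadrant : measurable (`]-oo, 0%R[ `*` `[0%R, +oo[ : set (R * R)).
  by apply: measurableX; exact: measurable_itv.
rewrite /expected_payoff.
under eq_integral do rewrite optimal_payoff_DiscBoth mulrDl EFinD.
rewrite ge0_integralD //; first last.
- exact: measurable_indic_bvn_pdf.
- by move=> v _; rewrite lee_fin mulr_ge0 // ltW // bvn_pdf_gt0.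
- by apply: measurable_indic_bvn_pdf; apply: measurableX => //; exact: measurable_itv.
- by move=> v _; rewrite lee_fin mulr_ge0 // ltW // bvn_pdf_gt0.
rewrite integral_indic_setXT_bvn_pdf //.
have -> : (\int[lebesgue_measure]_(x in `[0%R, +oo[) (normal_pdf mu1 s1 x)%:E =
    normal_tail (- mu1 / s1))%E.
  by rewrite -(integral_normal_pdf_tail mu1 _ s1_gt0) mulrC divfK ?gt_eqF // subrr.
rewrite lteDl ?normal_tail_fin_num //; apply: integral_indic_bvn_pdf_gt0 => //.
have itv_gt0 : (0 < lebesgue_measure (`]-oo, 0%R[ : set R) *
    lebesgue_measure (`[0%R, +oo[ : set R))%E.
  by rewrite !lebesgue_measure_itv /= ltNyr ltry add0e oppr0 adde0 mulyy lt0y.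
have quadrant_gt0 : (0 < lebesgue2 (`]-oo, 0%R[ `*` `[0%R, +oo[))%E.
  by rewrite product_measure1E //; exact: itv_gt0.
exact: quadrant_gt0.
Qed.

End expected_payoff.

Section comparison.
Variable R : realType.

Lemma expected_payoff_Disc1_lt_DiscBoth (mu1 mu2 s1 s2 rho : R) :
  0 < s1 -> 0 < s2 -> 0 < rho -> rho < 1 -> mu2 < 0 ->
  (expected_payoff mu1 mu2 s1 s2 rho Disc1 <
   expected_payoff mu1 mu2 s1 s2 rho DiscBoth)%E.
Proof.
move=> s1_gt0 s2_gt0 rho_gt0 rho_lt1 mu2_lt0.
have tail1 : (normal_tail (- mu1 / s1) < expected_payoff mu1 mu2 s1 s2 rho DiscBoth)%E.
  exact: normal_tail_lt_expected_payoff_DiscBoth.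
have tail2 : (normal_tail (- mu2 / s2) < expected_payoff mu1 mu2 s1 s2 rho DiscBoth)%E.
  by rewrite expected_payoff_swap //=; apply: normal_tail_lt_expected_payoff_DiscBoth.
have b_le : - mu2 / s2 <= - mu2 / s2 / rho.
  by rewrite ler_pMr ?invf_ge1 ?ltW // divr_gt0 ?oppr_gt0.
rewrite expected_payoff_Disc1 //.
have [a_le_b | b_lt_a] := leP (- mu1 / s1) (- mu2 / s2).
- apply: le_lt_trans tail1; apply: normal_tail_le.
  by rewrite le_min lexx (le_trans a_le_b b_le).
- apply: le_lt_trans tail2; apply: normal_tail_le.
  by rewrite le_min (ltW b_lt_a) b_le.
Qed.

Lemma expected_payoff_Disc2_lt_Disc1 (mu1 mu2 s1 s2 rho : R) :
  0 < s1 -> 0 < s2 -> 0 < rho -> rho < 1 -> mu1 < 0 -> mu2 < 0 ->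
  s1 / mu1 < s2 / mu2 ->
  (expected_payoff mu1 mu2 s1 s2 rho Disc2 <
   expected_payoff mu1 mu2 s1 s2 rho Disc1)%E.
Proof.
move=> s1_gt0 s2_gt0 rho_gt0 rho_lt1 mu1_lt0 mu2_lt0.
have ratioE (m s : R) : s / m = - (- m / s)^-1 by rewrite invf_div invrN mulrN opprK.
have a_gt0 : 0 < - mu1 / s1 by rewrite divr_gt0 ?oppr_gt0.
have b_gt0 : 0 < - mu2 / s2 by rewrite divr_gt0 ?oppr_gt0.
rewrite (ratioE mu1) (ratioE mu2) ltrN2 ltf_pV2 ?posrE // => a_lt_b.
rewrite expected_payoff_swap //= !expected_payoff_Disc1 //.
rewrite (@min_l _ _ (- mu1 / s1)); last first.
  by rewrite (le_trans (ltW a_lt_b)) // ler_pMr ?invf_ge1 ?ltW.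
by apply: normal_tail_lt; rewrite lt_min a_lt_b ltr_pMr ?invf_gt1.
Qed.

End comparison.

Theorem proposition3 (R : realType) (mu1 mu2 s1 s2 rho : R) :
  0 < s1 -> 0 < s2 -> 0 < rho -> rho < 1 ->
  mu1 < mu2 -> mu2 < 0 ->
  [/\ (s1 / mu1 < s2 / mu2 ->
         (expected_payoff mu1 mu2 s1 s2 rho Disc2 < expected_payoff mu1 mu2 s1 s2 rho Disc1)%E),
      (s2 / mu2 < s1 / mu1 ->
         (expected_payoff mu1 mu2 s1 s2 rho Disc1 < expected_payoff mu1 mu2 s1 s2 rho Disc2)%E),
      (expected_payoff mu1 mu2 s1 s2 rho Disc1 < expected_payoff mu1 mu2 s1 s2 rho DiscBoth)%E
    & (expected_payoff mu1 mu2 s1 s2 rho Disc2 < expected_payoff mu1 mu2 s1 s2 rho DiscBoth)%E].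
Proof.
move=> s1_gt0 s2_gt0 rho_gt0 rho_lt1 mu1_lt_mu2 mu2_lt0.
have mu1_lt0 := lt_trans mu1_lt_mu2 mu2_lt0.
split.
- exact: expected_payoff_Disc2_lt_Disc1.
- by rewrite !(expected_payoff_swap mu1) //=; apply: expected_payoff_Disc2_lt_Disc1.
- exact: expected_payoff_Disc1_lt_DiscBoth.
- by rewrite !(expected_payoff_swap mu1) //=; apply: expected_payoff_Disc1_lt_DiscBoth.
Qed.
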